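(* There is no commutative unitary ring $R$ with exactly three ideals such that $(Id(R),\cap,+,\otimes,\rightarrow,\{0\},R)$ is a BL-algebra which is not an MV-algebra.
   Context: For a commutative unitary ring $R$, $Id(R)$ is the set of its ideals, ordered by inclusion, with $I\cap J$, $I+J=\{i+j: i\in I, j\in J\}$, $I\otimes J=\{\sum_{k=1}^n i_kj_k: i_k\in I, j_k\in J\}$, and $I\rightarrow J=(J:I)=\{x\in R: xI\subseteq J\}$; this is a residuated lattice with bottom $\{0\}$ and top $R$. A (commutative) residuated lattice $(L,\wedge,\vee,\odot,\rightarrow,0,1)$ is a bounded lattice with a commutative ordered monoid $(L,\odot,1)$ such that $z\le x\rightarrow y$ iff $x\odot z\le y$. A BL-algebra is a residuated lattice satisfying $(x\rightarrow y)\vee(y\rightarrow x)=1$ and $x\odot(x\rightarrow y)=x\wedge y$. A BL-algebra is an MV-algebra (i.e. corresponds to an MV-algebra) when $x^{\ast\ast}=x$ for all $x$, where $x^\ast=x\rightarrow 0$. *)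

From mathcomp Require Import all_boot all_order all_algebra.
Set Implicit Arguments. Unset Strict Implicit. Unset Printing Implicit Defensive.
Import GRing.Theory.
Local Open Scope ring_scope.

Section Algebras.
Variable L : Type.
Variables (meet join mul impl : L -> L -> L) (bot top : L).

Definition rl_le (x y : L) : Prop := meet x y = x.

Definition is_residuated_lattice : Prop :=
  (forall x y z, meet x (meet y z) = meet (meet x y) z) /\
  (forall x y, meet x y = meet y x) /\
  (forall x y z, join x (join y z) = join (join x y) z) /\
  (forall x y, join x y = join y x) /\
  (forall x y, meet x (join x y) = x) /\
  (forall x y, join x (meet x y) = x) /\
  (forall x, join bot x = x) /\
  (forall x, meet top x = x) /\
  (forall x y z, mul x (mul y z) = mul (mul x y) z) /\
  (forall x y, mul x y = mul y x) /\
  (forall x, mul top x = x) /\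
  (forall x y z, rl_le x y -> rl_le (mul x z) (mul y z)) /\
  (forall x y z, rl_le z (impl x y) <-> rl_le (mul x z) y).

Definition is_BL_algebra : Prop :=
  is_residuated_lattice /\
  (forall x y, join (impl x y) (impl y x) = top) /\
  (forall x y, mul x (impl x y) = meet x y).

Definition is_MV_algebra : Prop :=
  is_BL_algebra /\ (forall x, impl (impl x bot) bot = x).
End Algebras.

Section Ideals.
Variable R : comPzRingType.

Definition is_ideal (I : R -> Prop) : Prop :=
  I 0 /\ (forall x y, I x -> I y -> I (x + y)) /\ (forall r x, I x -> I (r * x)).

Record ideal := Ideal { ideal_set :> R -> Prop; ideal_isideal : is_ideal ideal_set }.

Definition cap_set (I J : R -> Prop) : R -> Prop := fun x => I x /\ J x.
Definition sum_set (I J : R -> Prop) : R -> Prop :=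
  fun x => exists i j, I i /\ J j /\ x = i + j.
Definition prod_set (I J : R -> Prop) : R -> Prop :=
  fun x => exists s : seq (R * R),
    (forall p, p \in s -> I p.1 /\ J p.2) /\ x = \sum_(p <- s) p.1 * p.2.
Definition res_set (I J : R -> Prop) : R -> Prop :=
  fun x => forall i, I i -> J (x * i).

Lemma cap_is_ideal (I J : ideal) : is_ideal (cap_set I J).
Proof.
case: I J => I [I0 [ID IM]] [J [J0 [JD JM]]]; rewrite /cap_set /=.
split; first by [].
split; first by move=> x y [? ?] [? ?]; split; auto.
by move=> r x [? ?]; split; auto.
Qed.

Lemma sum_is_ideal (I J : ideal) : is_ideal (sum_set I J).
Proof.
case: I J => I [I0 [ID IM]] [J [J0 [JD JM]]]; rewrite /sum_set /=.
split; first by exists 0, 0; rewrite addr0.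
split.
  move=> x y [i [j [Hi [Hj ->]]]] [i' [j' [Hi' [Hj' ->]]]].
  exists (i + i'), (j + j'); do 2?split; auto.
  by rewrite addrACA.
move=> r x [i [j [Hi [Hj ->]]]]; exists (r * i), (r * j); do 2?split; auto.
by rewrite mulrDr.
Qed.

Lemma prod_is_ideal (I J : ideal) : is_ideal (prod_set I J).
Proof.
case: I J => I [I0 [ID IM]] [J [J0 [JD JM]]]; rewrite /prod_set /=.
split; first by exists [::]; rewrite big_nil.
split.
  move=> x y [s [Hs ->]] [t [Ht ->]]; exists (s ++ t); split; last by rewrite big_cat.
  by move=> p; rewrite mem_cat => /orP [/Hs | /Ht].
move=> r x [s [Hs ->]]; exists [seq (r * p.1, p.2) | p <- s]; split.
  move=> p /mapP [q /Hs [Hq1 Hq2] ->] /=; split; auto.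
rewrite big_map mulr_sumr; apply: eq_bigr => p _ /=; by rewrite mulrA.
Qed.

Lemma res_is_ideal (I J : ideal) : is_ideal (res_set I J).
Proof.
case: I J => I [I0 [ID IM]] [J [J0 [JD JM]]]; rewrite /res_set /=.
split; first by move=> i _; rewrite mul0r.
split; first by move=> x y Hx Hy i Hi; rewrite mulrDl; auto.
by move=> r x Hx i Hi; rewrite -mulrA; auto.
Qed.

Lemma zero_is_ideal : is_ideal (fun x : R => x = 0).
Proof.
split; first by [].
split; first by move=> x y -> ->; rewrite addr0.
by move=> r x ->; rewrite mulr0.
Qed.

Lemma full_is_ideal : is_ideal (fun _ : R => True).
Proof. by []. Qed.

Definition id_meet (I J : ideal) : ideal := Ideal (cap_is_ideal I J).
Definition id_join (I J : ideal) : ideal := Ideal (sum_is_ideal I J).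
Definition id_mul (I J : ideal) : ideal := Ideal (prod_is_ideal I J).
Definition id_impl (I J : ideal) : ideal := Ideal (res_is_ideal I J).
Definition id_bot : ideal := Ideal zero_is_ideal.
Definition id_top : ideal := Ideal full_is_ideal.

Definition same_ideal (I J : ideal) : Prop := forall x, I x <-> J x.

Definition has_exactly_three_ideals : Prop :=
  exists I1 I2 I3 : ideal,
    ~ same_ideal I1 I2 /\ ~ same_ideal I1 I3 /\ ~ same_ideal I2 I3 /\
    forall J : ideal, same_ideal J I1 \/ same_ideal J I2 \/ same_ideal J I3.

Definition IdR_is_BL : Prop :=
  is_BL_algebra id_meet id_join id_mul id_impl id_bot id_top.
Definition IdR_is_MV : Prop :=
  is_MV_algebra id_meet id_join id_mul id_impl id_bot id_top.
End Ideals.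

From mathcomp Require Import all_boot all_order all_algebra.
From Stdlib Require Import Classical FunctionalExtensionality PropExtensionality ProofIrrelevance.
Set Implicit Arguments. Unset Strict Implicit. Unset Printing Implicit Defensive.
Import GRing.Theory.
Local Open Scope ring_scope.

(* In a ring with exactly three ideals 0 < M < R, every element outside M is a
   unit, and M annihilates itself: if x y <> 0 for x, y in M, then M = R x y,
   so x = t x y and x (1 - t y) = 0 with 1 - t y a unit.  Hence the annihilator
   M -> 0 is M itself, and X |-> (X -> 0) is an involution of the three ideals. *)

Section IdealBasics.
Variable R : comPzRingType.

Lemma ideal_ext (I J : ideal R) : same_ideal I J -> I = J.
Proof.
case: I J => I HI [J HJ] /= IJ.
have E : I = J.
  by apply: functional_extensionality => x; apply: propositional_extensionality.
by subst J; congr Ideal; apply: proof_irrelevance.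
Qed.

Lemma ideal0 (I : ideal R) : I 0.
Proof. by case: I => I []. Qed.

Lemma idealD (I : ideal R) x y : I x -> I y -> I (x + y).
Proof. by case: I => I [? [D ?]]; apply: D. Qed.

Lemma idealM (I : ideal R) r x : I x -> I (r * x).
Proof. by case: I => I [? [? M]]; apply: M. Qed.

Lemma pideal_is_ideal (x : R) : is_ideal (fun y => exists t, y = t * x).
Proof.
split; first by exists 0; rewrite mul0r.
split; first by move=> _ _ [s ->] [t ->]; exists (s + t); rewrite mulrDl.
by move=> r _ [t ->]; exists (r * t); rewrite mulrA.
Qed.

Definition pideal (x : R) : ideal R := Ideal (pideal_is_ideal x).

Lemma pideal_id (x : R) : pideal x x.
Proof. by exists 1; rewrite mul1r. Qed.

Definition ann (X : ideal R) : ideal R := id_impl X (id_bot R).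

Definition proper_nonzero (J : ideal R) : Prop :=
  (exists j, J j /\ j <> 0) /\ ~ J 1.

Lemma pideal_proper_nonzero (x : R) :
  x <> 0 -> (forall t, 1 <> t * x) -> proper_nonzero (pideal x).
Proof. by move=> x0 nunit; split; [exists x; split; [exact: pideal_id|] | case]. Qed.

End IdealBasics.

Section ThreeIdeals.
Variable R : comPzRingType.
Hypothesis three : has_exactly_three_ideals R.

Lemma id_bot_neq_top : id_bot R <> id_top R.
Proof.
move=> bot_top; have one0 : (1 : R) = 0 by rewrite -[_ = _]/(id_bot R 1) bot_top.
case: three => I1 [I2 [_ [I12 _]]]; apply: I12 => x.
have -> : x = 0 by rewrite -[x]mulr1 one0 mulr0.
by split=> _; apply: ideal0.
Qed.

Lemma no_four_distinct_ideals (A B C D : ideal R) :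
  A <> B -> A <> C -> A <> D -> B <> C -> B <> D -> C <> D -> False.
Proof.
case: three => I1 [I2 [I3 [_ [_ [_ every]]]]].
have {}every J : J = I1 \/ J = I2 \/ J = I3.
  by case: (every J) => [|[|]] /ideal_ext; auto.
by case: (every A) => [|[|]] ->; case: (every B) => [|[|]] ->;
   case: (every C) => [|[|]] ->; case: (every D) => [|[|]] ->; congruence.
Qed.

Lemma proper_nonzero_unique (J K : ideal R) :
  proper_nonzero J -> proper_nonzero K -> J = K.
Proof.
move=> [[j [Jj j0]] J1] [[k [Kk k0]] K1]; apply: NNPP => JK.
apply: (@no_four_distinct_ideals (id_bot R) (id_top R) J K) => //;
  [exact: id_bot_neq_top
  | by move=> E; apply: j0; rewrite -[_ = _]/(id_bot R j) E
  | by move=> E; apply: k0; rewrite -[_ = _]/(id_bot R k) E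
  | by move=> E; apply: J1; rewrite -E
  | by move=> E; apply: K1; rewrite -E].
Qed.

Section ProperIdeal.
Variable M : ideal R.
Hypothesis M_proper_nonzero : proper_nonzero M.

Lemma notin_proper_unit (u : R) : ~ M u -> exists s, 1 = s * u.
Proof.
move=> Mu; apply: NNPP => nunit.
have u0 : u <> 0 by move=> u0; apply: Mu; rewrite u0; apply: ideal0.
have uM : pideal u = M.
  apply: proper_nonzero_unique => //; apply: pideal_proper_nonzero => // t E.
  by apply: nunit; exists t.
by apply: Mu; rewrite -uM; apply: pideal_id.
Qed.

Lemma proper_mul0 (x y : R) : M x -> M y -> x * y = 0.
Proof.
move=> Mx My; apply: NNPP => xy0.
have M1 : ~ M 1 := M_proper_nonzero.2.
have xyM : pideal (x * y) = M.
  apply: proper_nonzero_unique => //; apply: pideal_proper_nonzero => // t E.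
  by apply: M1; rewrite E; do 2 apply: idealM.
have [t xE] : pideal (x * y) x by rewrite xyM.
have [s sE] : exists s, 1 = s * (1 - t * y).
  apply: notin_proper_unit => M1ty; apply: M1.
  by rewrite -(subrK (t * y) 1); apply: idealD => //; apply: idealM.
apply: xy0; suff -> : x = 0 by rewrite mul0r.
by rewrite -[x]mul1r sE -mulrA mulrBl mul1r -mulrA (mulrC y) -xE subrr mulr0.
Qed.

Lemma ann_proper : ann M = M.
Proof.
have [[x [Mx x0]] _] := M_proper_nonzero.
apply: proper_nonzero_unique => //; split.
  by exists x; split=> // y My; rewrite proper_mul0.
by move=> ann1; apply: x0; rewrite -[x]mul1r; apply: ann1.
Qed.

End ProperIdeal.

Lemma annK (X : ideal R) : ann (ann X) = X.
Proof.
apply: ideal_ext => r; split=> [annr|Xr i anni]; last by rewrite mulrC; apply: anni.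
have [X1|X1] := classic (X 1); first by rewrite -[r]mulr1; apply: idealM.
have [Xnz|X0] := classic (exists x, X x /\ x <> 0); last first.
  have -> : r = 0.
    rewrite -[r]mulr1; apply: annr => x Xx; rewrite mul1r.
    by apply: NNPP => x0; apply: X0; exists x.
  exact: ideal0.
have XM : proper_nonzero X by [].
rewrite -(ann_proper XM) => i Xi; apply: annr.
by rewrite (ann_proper XM).
Qed.

End ThreeIdeals.

Theorem proposition3p1 :
  ~ exists R : comPzRingType,
      has_exactly_three_ideals R /\ IdR_is_BL R /\ ~ IdR_is_MV R.
Proof.
move=> [R [three [BL notMV]]]; apply: notMV; split=> // X.
exact: annK.
Qed.
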